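(* Let $H^0\subset\mathrm{O}(1,n+1)$ be a subgroup that acts indecomposably on $\mathbb{R}^{1,n+1}$ and stabilises a null line $L$. Then the normaliser of $H^0$ stabilises $L$, i.e. $\mathrm{Nor}_{\mathrm{O}(1,n+1)}(H^0)\subset\mathrm{Stab}_{\mathrm{O}(1,n+1)}(L)$. In particular, if $H\subset\mathrm{O}(1,n+1)$ is an immersed Lie subgroup whose identity component $H^0$ acts indecomposably and stabilises $L$, then $H$ stabilises $L$ and $H$ acts indecomposably.
   Context: $\mathbb{R}^{1,n+1}$ denotes Minkowski space of signature $(1,n+1)$. A subgroup acts indecomposably if the Minkowski inner product is degenerate on every proper nonzero invariant subspace. *)

(* real Minkowski space R^{1,n+1} modelled by row vectors 'rV[R]_(n.+2)
   over an arbitrary R : realType (the real numbers). *)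
From HB Require Import structures.
From mathcomp Require Import all_boot all_order all_algebra.
From mathcomp Require Import reals.
Set Implicit Arguments. Unset Strict Implicit. Unset Printing Implicit Defensive.
Import Order.TTheory GRing.Theory Num.Theory.
Local Open Scope ring_scope.

Definition eta {R : realType} (n : nat) : 'M[R]_(n.+2) :=
  \matrix_(i, j) (if i == j then (if i == ord0 then -1 else 1) else 0).

Definition mink {R : realType} {n : nat} (u v : 'rV[R]_(n.+2)) : R :=
  (u *m eta n *m v^T) ord0 ord0.

(* O(1,n+1): matrices A (acting on column vectors x |-> A x) preserving eta.
   On row vectors the action is u |-> u *m A^T. *)
Definition in_O {R : realType} {n : nat} (A : 'M[R]_(n.+2)) : Prop :=
  A^T *m eta n *m A = eta n.

Definition subgroup_O {R : realType} {n : nat} (G : 'M[R]_(n.+2) -> Prop) : Prop :=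
  [/\ forall A, G A -> in_O A,
      G 1%:M,
      (forall A B, G A -> G B -> G (A *m B)) &
      (forall A, G A -> G (invmx A))].

Definition invariant_by {R : realType} {n : nat} (A : 'M[R]_(n.+2)) {m : nat}
  (U : 'M[R]_(m, n.+2)) : Prop := (U *m A^T <= U)%MS.

Definition degenerate_on {R : realType} {n : nat} {m : nat} (U : 'M[R]_(m, n.+2)) : Prop :=
  exists u : 'rV[R]_(n.+2), [/\ (u <= U)%MS, u != 0 &
    forall v : 'rV[R]_(n.+2), (v <= U)%MS -> mink u v = 0].

Definition indecomposable {R : realType} {n : nat} (G : 'M[R]_(n.+2) -> Prop) : Prop :=
  forall U : 'M[R]_(n.+2),
    (forall A, G A -> invariant_by A U) ->
    (0 < \rank U)%N -> (\rank U < n.+2)%N -> degenerate_on U.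

Definition null_line {R : realType} {n : nat} (l : 'rV[R]_(n.+2)) : Prop :=
  l != 0 /\ mink l l = 0.

Definition stabilises {R : realType} {n : nat} (A : 'M[R]_(n.+2)) (l : 'rV[R]_(n.+2)) : Prop :=
  invariant_by A l.

Definition normalises {R : realType} {n : nat} (g : 'M[R]_(n.+2))
  (G : 'M[R]_(n.+2) -> Prop) : Prop :=
  in_O g /\ forall h, G h <-> G (g *m h *m invmx g).

Definition normal_in {R : realType} {n : nat} (N H : 'M[R]_(n.+2) -> Prop) : Prop :=
  (forall A, N A -> H A) /\ (forall g h, H g -> N h -> N (g *m h *m invmx g)).

From Pilot Require Import Defs.
From HB Require Import structures.
From mathcomp Require Import all_boot all_order all_algebra.
From mathcomp Require Import reals.
From mathcomp Require Import ring.

Set Implicit Arguments.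
Unset Strict Implicit.
Unset Printing Implicit Defensive.
Import Order.TTheory GRing.Theory Num.Theory.
Local Open Scope ring_scope.

(* An indecomposable group stabilises at most one null line: two distinct null
   lines are never orthogonal, so they span a nondegenerate plane, which would
   be a proper invariant subspace (proper because n > 0).  If g normalises H^0,
   then gL is a null line stabilised by g^-1 H^0 g = H^0, hence gL = L.  Every
   element of a group H in which H^0 is normal normalises H^0, and H-invariant
   subspaces are H^0-invariant, so H inherits indecomposability. *)

Section Minkowski.
Variables (R : realType) (n : nat).
Implicit Types (l u v w : 'rV[R]_(n.+2)) (g : 'M[R]_(n.+2)).

Definition eta_coef (i : 'I_n.+2) : R := if i == ord0 then -1 else 1.

Lemma minkE u v : mink u v = \sum_i eta_coef i * (u 0 i * v 0 i).
Proof.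
rewrite /mink !mxE; apply: eq_bigr => j _; rewrite !mxE.
rewrite (bigD1 j) //= big1 => [|k /negbTE nkj]; last first.
  by rewrite !mxE nkj mulr0.
by rewrite !mxE eqxx addr0 /eta_coef; case: (j == ord0); ring.
Qed.

Lemma minkC u v : mink u v = mink v u.
Proof. by rewrite !minkE; apply: eq_bigr => i _; ring. Qed.

Lemma mink_linear_l a b u v w :
  mink (a *: u + b *: v) w = a * mink u w + b * mink v w.
Proof.
rewrite !minkE !mulr_sumr -big_split /=.
by apply: eq_bigr => i _; rewrite !mxE; ring.
Qed.

Lemma mink_linear_r a b u v w :
  mink w (a *: u + b *: v) = a * mink w u + b * mink w v.
Proof. by rewrite minkC mink_linear_l !(minkC w). Qed.

(* The form is positive definite on the hyperplane of zero time coordinate. *)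
Lemma null_time0_eq0 w : w 0 ord0 = 0 -> mink w w = 0 -> w = 0.
Proof.
move=> w0; rewrite minkE (bigD1 ord0) //= w0 mul0r mulr0 add0r => sum0.
have sq0 i : i != ord0 -> eta_coef i * (w 0 i * w 0 i) = 0.
  apply: psumr_eq0P sum0 i => i ni.
  by rewrite /eta_coef (negbTE ni) mul1r -expr2 sqr_ge0.
apply/rowP => i; rewrite mxE; have [->//|ni] := eqVneq i ord0.
move: (sq0 i ni); rewrite /eta_coef (negbTE ni) mul1r => /eqP.
by rewrite mulf_eq0 orbb => /eqP.
Qed.

Lemma null_orthogonal_sub l (l' : 'rV[R]_(n.+2)) :
  l != 0 -> mink l l = 0 -> mink l' l' = 0 -> mink l l' = 0 -> (l' <= l)%MS.
Proof.
move=> nl ll l'l' ll'; set t := l 0 ord0; set s := l' 0 ord0.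
have t_neq0 : t != 0 by apply: contra nl => /eqP t0; apply/eqP/null_time0_eq0.
(* [s l - t l'] has time coordinate 0 and is null, hence vanishes. *)
have comb0 : s *: l + (- t) *: l' = 0.
  apply: null_time0_eq0; first by rewrite !mxE -/t -/s; ring.
  by rewrite !mink_linear_l !mink_linear_r (minkC l' l) ll l'l' ll'; ring.
suff -> : l' = (s / t) *: l by apply: scalemx_sub.
apply: (scalerI (a := t)) => //; rewrite scalerA mulrC divfK //.
by apply/esym/eqP; rewrite -subr_eq0 -scaleNr comb0.
Qed.

Lemma stable_null_line_unique (H0 : 'M[R]_(n.+2) -> Prop) l (l' : 'rV[R]_(n.+2)) :
  (0 < n)%N -> indecomposable H0 -> null_line l -> null_line l' ->
  (forall h, H0 h -> stabilises h l) -> (forall h, H0 h -> stabilises h l') ->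
  (l' <= l)%MS.
Proof.
move=> n_gt0 indec [nl ll] [nl' l'l'] stab stab'; apply: contraT => nsub.
have ll'_neq0 : mink l l' != 0.
  by apply: contra nsub => /eqP; apply: null_orthogonal_sub.
have [] : degenerate_on (l + l')%MS.
  apply: indec.
  - by move=> A HA; rewrite /invariant_by addsmxMr addsmxS ?stab ?stab'.
  - by apply: leq_trans (mxrankS (addsmxSl l l')); rewrite rank_rV nl.
  - apply: leq_ltn_trans (mxrank_adds_leqif l l').1 _.
    by apply: leq_ltn_trans (leq_add (rank_leq_row l) (rank_leq_row l')) _.
move=> u [/sub_addsmxP [[a b] /= ->] u_neq0 u_orth].
rewrite [a]mx11_scalar [b]mx11_scalar !mul_scalar_mx in u_neq0 u_orth.
have := u_orth l (addsmxSl l l'); have := u_orth l' (addsmxSr l l').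
rewrite !mink_linear_l ll l'l' (minkC l' l) !mulr0 addr0 add0r.
move=> /eqP; rewrite mulf_eq0 (negbTE ll'_neq0) orbF => /eqP a0.
move=> /eqP; rewrite mulf_eq0 (negbTE ll'_neq0) orbF => /eqP b0.
by rewrite a0 b0 !scale0r addr0 eqxx in u_neq0.
Qed.

Lemma eta_invol : Defs.eta n *m Defs.eta n = 1%:M :> 'M[R]_(n.+2).
Proof.
apply/matrixP => i j; rewrite !mxE (bigD1 i) //= big1 => [|k /negbTE nki]; last first.
  by rewrite !mxE (eq_sym i) nki mul0r.
rewrite !mxE eqxx addr0; have [->|_] := eqVneq i j; last by rewrite mulr0.
by case: (j == ord0); rewrite ?mulrNN mulr1.
Qed.

Lemma in_O_unit g : in_O g -> g \in unitmx.
Proof.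
move=> gO; suff /mulmx1_unit[] : (Defs.eta n *m g^T *m Defs.eta n) *m g = 1%:M by [].
by rewrite -!mulmxA [g^T *m _]mulmxA gO eta_invol.
Qed.

Lemma in_O_mink g u v : in_O g -> mink (u *m g^T) (v *m g^T) = mink u v.
Proof.
by move=> gO; rewrite /mink trmx_mul trmxK !mulmxA -(mulmxA u) -(mulmxA u) gO.
Qed.

Lemma conj_stable_stabilises (H0 : 'M[R]_(n.+2) -> Prop) l g :
  (0 < n)%N -> indecomposable H0 -> null_line l ->
  (forall h, H0 h -> stabilises h l) -> in_O g ->
  (forall h, H0 h -> H0 (invmx g *m h *m g)) -> stabilises g l.
Proof.
move=> n_gt0 indec [nl ll] stab gO conj_stable; have g_unit := in_O_unit gO.
rewrite /stabilises /invariant_by.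
apply: (stable_null_line_unique n_gt0 indec (conj nl ll)) => //.
- split; last by rewrite in_O_mink.
  apply: contra nl => /eqP lg0; apply/eqP.
  by rewrite -[l]mulmx1 -trmx1 -(mulVmx g_unit) trmx_mul mulmxA lg0 mul0mx.
- move=> h Hh; rewrite /stabilises /invariant_by -mulmxA.
  have -> : g^T *m h^T = (invmx g *m h *m g)^T *m g^T.
    by rewrite -!trmx_mul !mulmxA mulmxV // mul1mx.
  by rewrite mulmxA submxMr // stab //; apply: conj_stable.
Qed.

End Minkowski.

Theorem lemma1 (R : realType) (n : nat) (H0 : 'M[R]_(n.+2) -> Prop)
    (l : 'rV[R]_(n.+2)) :
  (0 < n)%N ->
  subgroup_O H0 -> indecomposable H0 ->
  null_line l -> (forall h, H0 h -> stabilises h l) ->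
  (forall g, normalises g H0 -> stabilises g l) /\
  (forall H : 'M[R]_(n.+2) -> Prop,
     subgroup_O H -> normal_in H0 H ->
     (forall h, H h -> stabilises h l) /\ indecomposable H).
Proof.
move=> n_gt0 _ indec nl stab; split.
- move=> g [gO normg]; have g_unit := in_O_unit gO.
  apply: (conj_stable_stabilises n_gt0 indec nl stab gO) => h Hh.
  by apply/normg; rewrite !mulmxA mulmxV // mul1mx -mulmxA mulmxV // mulmx1.
- move=> H [HO _ _ Hinv] [H0_sub normal]; split.
  + move=> g Hg; apply: (conj_stable_stabilises n_gt0 indec nl stab (HO _ Hg)).
    by move=> h Hh; have := normal _ _ (Hinv _ Hg) Hh; rewrite invmxK.
  + by move=> U invU; apply: indec => A HA; apply/invU/H0_sub.
Qed.
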